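(* For every finite bounded commutative BCK-algebra $\mathcal A$ and each of the equations $x=1$ and $\neg x=1$ (in one variable $x$), either the degree of satisfiability of the equation in $\mathcal A$ equals $1$ or it is at most $\frac12$. Thus both equations have finite satisfiability gap $\frac12$ among bounded commutative BCK-algebras, and this value is realized by the two-element algebra $\mathcal C_2$ (with $1=1$).
   Context: A BCK-algebra is a set $A$ with a binary operation $\cdot$ and a constant $0$ such that for all $x,y,z\in A$: (BCK1) $((x\cdot y)\cdot(x\cdot z))\cdot(z\cdot y)=0$; (BCK2) $(x\cdot(x\cdot y))\cdot y=0$; (BCK3) $x\cdot x=0$; (BCK4) $0\cdot x=0$; (BCK5) $x\cdot y=0$ and $y\cdot x=0$ imply $x=y$. Define $x\wedge y:=y\cdot(y\cdot x)$; the algebra is commutative if $x\wedge y=y\wedge x$ for all $x,y$. A bounded BCK-algebra is a BCK-algebra with a distinguished element $1$ with $x\cdot 1=0$ for all $x$; $\neg x:=1\cdot x$. The degree of satisfiability of a one-variable equation $\varphi(x)$ in a finite algebra $M$ is $|\{a\in M:\varphi(a)\}|/|M|$. $\mathcal C_2$ is the BCK-algebra on $\{0,1\}$ with $x\cdot y=\max\{x-y,0\}$. *)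

From mathcomp Require Import all_boot all_order all_algebra.
Set Implicit Arguments. Unset Strict Implicit. Unset Printing Implicit Defensive.
Import GRing.Theory Num.Theory.
Local Open Scope ring_scope.

(* A BCK-algebra (A, op, 0) on a carrier T; op x y stands for x . y *)
Definition is_BCK (T : Type) (op : T -> T -> T) (z : T) : Prop :=
  [/\ (forall x y w, op (op (op x y) (op x w)) (op w y) = z),
      (forall x y, op (op x (op x y)) y = z),
      (forall x, op x x = z),
      (forall x, op z x = z)
    & (forall x y, op x y = z -> op y x = z -> x = y)].

Definition bck_meet (T : Type) (op : T -> T -> T) (x y : T) : T := op y (op y x).

Definition is_commutative_BCK (T : Type) (op : T -> T -> T) (z : T) : Prop :=
  is_BCK op z /\ forall x y, bck_meet op x y = bck_meet op y x.

Definition is_bounded_commutative_BCK (T : Type) (op : T -> T -> T) (z o : T)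
  : Prop := is_commutative_BCK op z /\ forall x, op x o = z.

Definition bck_neg (T : Type) (op : T -> T -> T) (o x : T) : T := op o x.

Definition dsat (T : finType) (phi : pred T) : rat :=
  (#|[set a | phi a]|%:R / #|T|%:R)%R.

(* The two-element algebra C_2 on {0,1} = bool (false = 0, true = 1),
   x . y = max(x - y, 0) *)
Definition C2op (x y : bool) : bool := x && ~~ y.

From mathcomp Require Import all_boot all_order all_algebra.
Import GRing.Theory Num.Theory.
Local Open Scope ring_scope.

(* Both equations x = 1 and ~x = 1 have at most one solution in a bounded
   commutative BCK-algebra: for x = 1 this is obvious, and ~x = 1 forces
   x = 0, because commutativity gives x . 0 = x /\ 1 = 1 /\ x = 1 . 1 = 0,
   while 0 . x = 0 always holds, so x = 0 by antisymmetry (BCK5).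
   A purely combinatorial fact then concludes: if a one-variable equation has
   at most one solution in a finite algebra of size n, its degree of
   satisfiability is 0, 1/n or 1 (the last only when n = 1), hence it is 1
   or at most 1/2.  Sharpness is witnessed by C_2, which is checked to be a
   bounded commutative BCK-algebra by exhaustive evaluation, and in which
   each equation has exactly one of the two elements as solution. *)

Definition at_most_one_solution {T : Type} (phi : T -> bool) : Prop :=
  forall a b, phi a -> phi b -> a = b.

Section DegreeOfSatisfiability.
Variable T : finType.

Lemma dsat_unique_solution (phi : pred T) (a : T) :
  phi =1 pred1 a -> dsat phi = 1 / #|T|%:R.
Proof.
move=> phi_a; rewrite /dsat.
have -> : [set x | phi x] = [set a] by apply/setP => x; rewrite !inE phi_a.
by rewrite cards1.
Qed.

Lemma dsat_at_most_one_solution (phi : pred T) :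
  at_most_one_solution phi -> dsat phi = 1 \/ dsat phi <= 1 / 2.
Proof.
move=> uniq_phi.
have [a phi_a | no_sol] := pickP phi; last first.
  right; rewrite /dsat.
  have -> : [set x | phi x] = set0 by apply/setP => x; rewrite !inE no_sol.
  by rewrite cards0 mul0r.
have -> : dsat phi = 1 / #|T|%:R.
  apply: dsat_unique_solution => x.
  by apply/idP/eqP => [phi_x | ->]; [exact: uniq_phi phi_x phi_a | exact: phi_a].
have T_gt0 : (0 < #|T|)%N by apply/card_gt0P; exists a.
have [T_gt1 | T_le1] := ltnP 1 #|T|.
  right; rewrite ler_pdivrMr ?ltr0n // mul1r ler_pdivlMl // mulr1.
  by rewrite (ler_nat rat 2 #|T|).
have -> : #|T| = 1%N by apply/anti_leq; rewrite T_le1.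
by left; rewrite divr1.
Qed.

End DegreeOfSatisfiability.

Section BoundedCommutativeBCK.
Variables (T : eqType) (op : T -> T -> T) (z o : T).
Hypothesis commBCK : is_commutative_BCK op z.
Hypothesis bounded : forall x, op x o = z.

(* ~x = 1 holds only for x = 0: commutativity of the meet on x and 1 turns
   ~x = 1 into x . 0 = 0, and 0 . x = 0 holds in any BCK-algebra. *)
Lemma neg_eq_one_zero (x : T) : bck_neg op o x = o -> x = z.
Proof.
have [[_ _ opxx zopx antisym] meetC] := commBCK.
move=> neg_x; have := meetC x o; rewrite /bck_meet /bck_neg in neg_x *.
rewrite neg_x opxx bounded => xop0.
exact: antisym (zopx x).
Qed.

Lemma neg_eq_one_at_most_one_solution :
  at_most_one_solution (fun x => bck_neg op o x == o).
Proof. by move=> a b /eqP/neg_eq_one_zero -> /eqP/neg_eq_one_zero ->. Qed.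

End BoundedCommutativeBCK.

Lemma C2_bounded_commutative_BCK : is_bounded_commutative_BCK C2op false true.
Proof.
by do ![split]; do ![case=> //=].
Qed.

Theorem proposition4p3 :
  (forall (T : finType) (op : T -> T -> T) (z o : T),
     is_bounded_commutative_BCK op z o ->
     (dsat (fun a : T => a == o) = 1 \/ dsat (fun a : T => a == o) <= 1 / 2) /\
     (dsat (fun a : T => bck_neg op o a == o) = 1 \/
      dsat (fun a : T => bck_neg op o a == o) <= 1 / 2)) /\
  (is_bounded_commutative_BCK C2op false true /\
   dsat (fun a : bool => a == true) = 1 / 2 /\
   dsat (fun a : bool => bck_neg C2op true a == true) = 1 / 2).
Proof.
split.
  move=> T op z o [commBCK bounded]; split; apply: dsat_at_most_one_solution.
    by move=> a b /eqP -> /eqP ->.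
  exact: neg_eq_one_at_most_one_solution commBCK bounded.
split; first exact: C2_bounded_commutative_BCK.
split.
  by rewrite (@dsat_unique_solution _ _ true) ?card_bool.
by rewrite (@dsat_unique_solution _ _ false) ?card_bool //; case.
Qed.
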